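(* Consider an NCG whose consumption price functions are $\tau_a(t)=\gamma_a t^{\beta}+\eta_a$ with constants $\gamma_a>0$, $\eta_a>0$ ($a\in A$) and $\beta\ge0$ independent of $a$. For a user volume vector $d$ let $d_{\min}=\min\{d_k:k=1,\dots,K\}$. Then there is a constant $c>0$ depending only on the game structure ($A$, $\mathcal S$, $r$, $\gamma_a$, $\eta_a$, $\beta$) such that for every user volume vector $d$ with $d_{\min}>0$, every SO-profile for $d$ is an $\epsilon$-approximate NE-profile with $\epsilon=c\, d_{\min}^{-\beta}$; that is, SO-profiles are $O(d_{\min}^{-\beta})$-approximate NE-profiles.
   Context: A non-atomic congestion game (NCG) consists of: a finite set $A$ of resources; an integer $K\ge 1$ of user groups; pairwise disjoint finite nonempty strategy sets $\mathcal S_1,\dots,\mathcal S_K$, $\mathcal S=\bigcup_k\mathcal S_k$; constants $r(a,s)\ge 0$ with $\sum_{a} r(a,s)>0$ for every $s$ and $\sum_{s} r(a,s)>0$ for every $a$; continuous nondecreasing consumption price functions $\tau_a:[0,\infty)\to[0,\infty)$; and a user volume vector $d\in\mathbb R_{\ge0}^K$. A feasible profile for $d$ is $f=(f_s)_{s\in\mathcal S}$, $f_s\ge0$, $\sum_{s\in\mathcal S_k}f_s=d_k$; loads $f_a=\sum_s r(a,s)f_s$, strategy prices $\tau_s(f)=\sum_a r(a,s)\tau_a(f_a)$, cost $C(f)=\sum_a f_a\tau_a(f_a)$. An SO-profile is a feasible profile minimizing $C$. For $\epsilon>0$, a feasible profile $f$ is an $\epsilon$-approximate NE-profile if for every $k$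 and all $s,s'\in\mathcal S_k$ with $f_s>0$, $\tau_s(f)\le(1+\epsilon)\tau_{s'}(f)$. (Routing games with BPR travel times $\tau_a(x)=\tau_a(0)(1+\alpha(x/u_a)^\beta)$ are the motivating special case.) *)

From Stdlib Require Import Reals Lra Lia List.
Import ListNotations.
Open Scope R_scope.

(* Game data: resources A = {0,...,nA-1}, strategies S = {0,...,nS-1},
   groups {0,...,K-1}; grp s is the group k with s in S_k (so the S_k are
   pairwise disjoint by construction); r a s = r(a,s). *)

Definition rsum (n : nat) (F : nat -> R) : R :=
  fold_right Rplus 0 (map F (seq 0 n)).

(* t^b for t >= 0 and b >= 0, with the convention 0^0 = 1 and 0^b = 0 for b > 0 *)
Definition rpow (t b : R) : R :=
  if Rle_dec t 0 then (if Req_EM_T b 0 then 1 else 0) else Rpower t b.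

Definition tau (gam eta : nat -> R) (beta : R) (a : nat) (t : R) : R :=
  gam a * rpow t beta + eta a.

Definition feasible (nS K : nat) (grp : nat -> nat) (d : nat -> R) (f : nat -> R) : Prop :=
  (forall s, (s < nS)%nat -> 0 <= f s) /\
  (forall k, (k < K)%nat ->
     rsum nS (fun s => if Nat.eqb (grp s) k then f s else 0) = d k).

Definition load (nS : nat) (r : nat -> nat -> R) (f : nat -> R) (a : nat) : R :=
  rsum nS (fun s => r a s * f s).

Definition sprice (nA nS : nat) (r : nat -> nat -> R) (gam eta : nat -> R) (beta : R)
  (f : nat -> R) (s : nat) : R :=
  rsum nA (fun a => r a s * tau gam eta beta a (load nS r f a)).

Definition cost (nA nS : nat) (r : nat -> nat -> R) (gam eta : nat -> R) (beta : R)
  (f : nat -> R) : R :=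
  rsum nA (fun a => load nS r f a * tau gam eta beta a (load nS r f a)).

Definition SO_profile (nA nS K : nat) (grp : nat -> nat) (r : nat -> nat -> R)
  (gam eta : nat -> R) (beta : R) (d f : nat -> R) : Prop :=
  feasible nS K grp d f /\
  forall g, feasible nS K grp d g ->
    cost nA nS r gam eta beta f <= cost nA nS r gam eta beta g.

Definition approx_NE (nA nS K : nat) (grp : nat -> nat) (r : nat -> nat -> R)
  (gam eta : nat -> R) (beta : R) (eps : R) (d f : nat -> R) : Prop :=
  feasible nS K grp d f /\
  forall s s', (s < nS)%nat -> (s' < nS)%nat -> grp s = grp s' -> 0 < f s ->
    sprice nA nS r gam eta beta f s <= (1 + eps) * sprice nA nS r gam eta beta f s'.

Definition dmin (K : nat) (d : nat -> R) : R :=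
  fold_right Rmin (d 0%nat) (map d (seq 0 K)).

(* A system optimum satisfies the first-order condition that, within a group,
   every used strategy has least marginal price
   [sum_a r(a,s) (t tau_a(t))'(f_a)].  For [tau_a(t) = gam_a t^beta + eta_a] this
   marginal price equals [(1 + beta) tau_s(f) - beta E_s] with
   [E_s = sum_a r(a,s) eta_a], so prices within a group differ at most by the
   constant [beta max_s E_s].  Moreover some strategy of each group carries volume
   at least [d_min / |S|], which forces every price in the group to be of order at
   least [d_min^beta]; dividing turns the additive error into a relative one of
   order [d_min^(-beta)]. *)

From Stdlib Require Import Reals Lra Lia List.
Open Scope R_scope.

Lemma rsum_S n F : rsum (S n) F = rsum n F + F n.
Proof.
  unfold rsum. rewrite seq_S, map_app, fold_right_app. simpl.
  generalize (map F (seq 0 n)); intros l.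
  induction l as [|x l IH]; simpl; [ring | rewrite IH; ring].
Qed.

Lemma rsum_ext n F G : (forall i, (i < n)%nat -> F i = G i) -> rsum n F = rsum n G.
Proof.
  induction n as [|n IH]; intros H; [reflexivity|].
  rewrite !rsum_S, IH, H; auto with arith.
Qed.

Lemma rsum_plus n F G : rsum n (fun i => F i + G i) = rsum n F + rsum n G.
Proof. induction n as [|n IH]; [unfold rsum; simpl; ring | rewrite !rsum_S, IH; ring]. Qed.

Lemma rsum_minus n F G : rsum n (fun i => F i - G i) = rsum n F - rsum n G.
Proof. induction n as [|n IH]; [unfold rsum; simpl; ring | rewrite !rsum_S, IH; ring]. Qed.

Lemma rsum_scal n c F : rsum n (fun i => c * F i) = c * rsum n F.
Proof. induction n as [|n IH]; [unfold rsum; simpl; ring | rewrite !rsum_S, IH; ring]. Qed.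

Lemma rsum_const n c : rsum n (fun _ => c) = INR n * c.
Proof. induction n as [|n IH]; [unfold rsum; simpl; ring | rewrite rsum_S, IH, S_INR; ring]. Qed.

Lemma rsum_le n F G : (forall i, (i < n)%nat -> F i <= G i) -> rsum n F <= rsum n G.
Proof.
  induction n as [|n IH]; intros H; [unfold rsum; simpl; lra|].
  rewrite !rsum_S. apply Rplus_le_compat; [apply IH; intros|apply H]; auto with arith.
Qed.

Lemma rsum_nonneg n F : (forall i, (i < n)%nat -> 0 <= F i) -> 0 <= rsum n F.
Proof.
  intros H. replace 0 with (rsum n (fun _ => 0)) by (rewrite rsum_const; ring).
  apply rsum_le; auto.
Qed.

Lemma rsum_term_le n F j : (forall i, (i < n)%nat -> 0 <= F i) -> (j < n)%nat -> F j <= rsum n F.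
Proof.
  induction n as [|n IH]; intros H Hj; [lia|]. rewrite rsum_S.
  destruct (Nat.eq_dec j n) as [->|Hjn].
  - assert (0 <= rsum n F) by (apply rsum_nonneg; auto). lra.
  - assert (F j <= rsum n F) by (apply IH; [auto | lia]).
    assert (0 <= F n) by auto. lra.
Qed.

Lemma rsum_delta n v c : (v < n)%nat -> rsum n (fun s => if Nat.eqb s v then c else 0) = c.
Proof.
  induction n as [|n IH]; intros Hv; [lia|]. rewrite rsum_S.
  destruct (Nat.eqb_spec n v) as [<-|Hnv].
  - rewrite (rsum_ext n _ (fun _ => 0)), rsum_const; [ring|].
    intros i Hi. destruct (Nat.eqb_spec i n); [lia | reflexivity].
  - rewrite IH; [ring | lia].
Qed.

Lemma exists_argmax n F : (0 < n)%nat ->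
  exists i, (i < n)%nat /\ forall j, (j < n)%nat -> F j <= F i.
Proof.
  induction n as [|[|n] IH]; intros Hn; [lia| exists 0%nat; split; [lia | intros j Hj; replace j with 0%nat by lia; lra]|].
  destruct IH as [i [Hi Hmax]]; [lia|].
  destruct (Rle_dec (F (S n)) (F i)) as [Hle|Hlt].
  - exists i. split; [lia|]. intros j Hj.
    destruct (Nat.eq_dec j (S n)) as [->|]; [lra | apply Hmax; lia].
  - exists (S n). split; [lia|]. intros j Hj.
    destruct (Nat.eq_dec j (S n)) as [->|]; [lra|].
    specialize (Hmax j ltac:(lia)). lra.
Qed.

Lemma rsum_le_max n F : (0 < n)%nat -> exists i, (i < n)%nat /\ rsum n F <= INR n * F i.
Proof.
  intros Hn. destruct (exists_argmax n F Hn) as [i [Hi Hmax]].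
  exists i. split; [exact Hi|]. rewrite <- rsum_const. apply rsum_le; auto.
Qed.

Lemma exists_pos_lower_bound n F : (0 < n)%nat -> (forall i, (i < n)%nat -> 0 < F i) ->
  exists m, 0 < m /\ forall i, (i < n)%nat -> m <= F i.
Proof.
  intros Hn Hpos. destruct (exists_argmax n (fun i => - F i) Hn) as [i [Hi Hmax]].
  exists (F i). split; [auto|]. intros j Hj. specialize (Hmax j Hj). lra.
Qed.

Lemma dmin_le K d k : (k < K)%nat -> dmin K d <= d k.
Proof.
  intros Hk. unfold dmin. assert (Hin : In k (seq 0 K)) by (apply in_seq; lia).
  induction (seq 0 K) as [|x l IH]; simpl in *; [tauto|].
  destruct Hin as [->|Hin]; [apply Rmin_l | eapply Rle_trans; [apply Rmin_r | auto]].
Qed.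

Lemma Rpower_pos x y : 0 < Rpower x y.
Proof. apply exp_pos. Qed.

Lemma rpow_nonneg t b : 0 <= rpow t b.
Proof.
  unfold rpow. destruct (Rle_dec t 0); [destruct (Req_EM_T b 0); lra|].
  left; apply Rpower_pos.
Qed.

Lemma rpow_Rpower t b : 0 < t -> rpow t b = Rpower t b.
Proof. intros Ht. unfold rpow. destruct (Rle_dec t 0); [lra | reflexivity]. Qed.

Lemma rpow_0_r t : rpow t 0 = 1.
Proof.
  unfold rpow. destruct (Rle_dec t 0).
  - destruct (Req_EM_T 0 0); lra.
  - apply Rpower_O; lra.
Qed.

Lemma rpow_nonpos_l t b : t <= 0 -> b <> 0 -> rpow t b = 0.
Proof.
  intros Ht Hb. unfold rpow. destruct (Rle_dec t 0); [|lra]. destruct (Req_EM_T b 0); lra.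
Qed.

Lemma rpow_le_compat b x y : 0 <= b -> 0 <= x <= y -> rpow x b <= rpow y b.
Proof.
  intros Hb [[Hx| <-] Hxy].
  - rewrite !rpow_Rpower by lra. apply Rle_Rpower_l; lra.
  - destruct Hb as [Hb| <-].
    + rewrite rpow_nonpos_l by lra. apply rpow_nonneg.
    + rewrite !rpow_0_r; lra.
Qed.

Lemma rpow_mult_distr b x y : 0 <= b -> 0 <= x -> 0 < y -> rpow (x * y) b = rpow x b * rpow y b.
Proof.
  intros Hb [Hx| <-] Hy.
  - rewrite !rpow_Rpower by nra. symmetry; apply Rpower_mult_distr; auto.
  - rewrite Rmult_0_l. destruct Hb as [Hb| <-].
    + rewrite rpow_nonpos_l by lra. ring.
    + rewrite !rpow_0_r; ring.
Qed.

Lemma Rpower_small b e : 0 < b -> 0 < e -> exists dl, 0 < dl /\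
  forall y, 0 < y < dl -> Rpower y b < e.
Proof.
  intros Hb He. exists (exp (ln e / b)). split; [apply exp_pos|].
  intros y [Hy Hyd]. unfold Rpower. rewrite <- (exp_ln e) by exact He.
  apply exp_increasing.
  assert (ln y < ln e / b) by (rewrite <- (ln_exp (ln e / b)); apply ln_increasing; auto).
  apply (Rmult_lt_compat_l b) in H; [|exact Hb].
  replace (b * (ln e / b)) with (ln e) in H by (field; lra). lra.
Qed.

Lemma limit1_in_right0_nonneg q L t0 : limit1_in q (fun t => 0 < t) L 0 -> 0 < t0 ->
  (forall t, 0 < t < t0 -> 0 <= q t) -> 0 <= L.
Proof.
  intros Hq Ht0 Hpos. apply Rnot_lt_le; intros HL.
  destruct (Hq (- L)) as [al [Hal H]]; [lra|].
  set (t := Rmin al t0 / 2).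
  assert (0 < Rmin al t0) by (apply Rmin_glb_lt; auto).
  pose proof (Rmin_l al t0). pose proof (Rmin_r al t0).
  specialize (H t). simpl in H. unfold Rdist in H.
  specialize (Hpos t ltac:(unfold t; lra)).
  assert (Rabs (q t - L) < - L).
  { apply H. split; [unfold t; lra|]. rewrite Rminus_0_r, Rabs_pos_eq; unfold t; lra. }
  apply Rabs_def2 in H3. lra.
Qed.

Lemma limit1_in_rsum n (q : nat -> R -> R) (L : nat -> R) D x0 :
  (forall a, (a < n)%nat -> limit1_in (q a) D (L a) x0) ->
  limit1_in (fun t => rsum n (fun a => q a t)) D (rsum n L) x0.
Proof.
  induction n as [|n IH]; intros H.
  - exact (limit_free (fun _ => 0) D 0 x0).
  - apply limit1_ext with (fun t => rsum n (fun a => q a t) + q n t).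
    + intros t _. rewrite rsum_S. reflexivity.
    + rewrite rsum_S. apply limit_plus; [apply IH; auto | apply H]; auto with arith.
Qed.

Lemma limit1_in_diff_quotient h x l D : derivable_pt_lim h x l ->
  limit1_in (fun t => (h (x + t * D) - h x) / t) (fun t => 0 < t) (l * D) 0.
Proof.
  intros Hh e He. simpl. unfold Rdist.
  destruct (Req_dec D 0) as [->|HD].
  { exists 1. split; [lra|]. intros t [Ht _].
    replace (x + t * 0) with x by ring. unfold Rdiv.
    rewrite Rminus_diag, Rmult_0_l, Rmult_0_r, Rminus_0_r, Rabs_R0. exact He. }
  assert (HaD : 0 < Rabs D) by (apply Rabs_pos_lt; exact HD).
  destruct (Hh (e / Rabs D)) as [dl Hdl]; [apply Rdiv_lt_0_compat; auto|].
  exists (dl / Rabs D). split; [apply Rdiv_lt_0_compat; [apply cond_pos | exact HaD]|].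
  intros t [Ht Htd]. rewrite Rminus_0_r, Rabs_pos_eq in Htd by lra.
  assert (Hsmall : Rabs (t * D) < dl).
  { rewrite Rabs_mult, Rabs_pos_eq by lra.
    apply (Rmult_lt_compat_r (Rabs D)) in Htd; [|exact HaD].
    replace (dl / Rabs D * Rabs D) with (pos dl) in Htd by (field; lra). exact Htd. }
  specialize (Hdl (t * D) ltac:(apply Rmult_integral_contrapositive; split; lra) Hsmall).
  replace ((h (x + t * D) - h x) / t - l * D) with (D * ((h (x + t * D) - h x) / (t * D) - l))
    by (field; lra).
  rewrite Rabs_mult.
  apply (Rmult_lt_compat_l (Rabs D)) in Hdl; [|exact HaD].
  replace (Rabs D * (e / Rabs D)) with e in Hdl by (field; lra). exact Hdl.
Qed.

Lemma derivable_pt_lim_cost_pos g h b x : 0 < x ->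
  derivable_pt_lim (fun y => y * (g * rpow y b + h)) x (g * (1 + b) * rpow x b + h).
Proof.
  intros Hx.
  apply derivable_pt_lim_locally_ext with (fun y => y * (g * Rpower y b + h)) 0 (x + 1);
    [lra | intros z Hz; rewrite rpow_Rpower by lra; reflexivity|].
  replace (g * (1 + b) * rpow x b + h) with
     (1 * (g * Rpower x b + h) + x * (g * (b * Rpower x (b - 1)) + 0)).
  - apply (derivable_pt_lim_mult (fun y => y) (fun y => g * Rpower y b + h)).
    + apply derivable_pt_lim_id.
    + apply (derivable_pt_lim_plus (fun y => g * Rpower y b) (fun _ => h)).
      * apply (derivable_pt_lim_scal (fun y => Rpower y b)). apply derivable_pt_lim_power; auto.
      * apply derivable_pt_lim_const.
  - assert (E : x * Rpower x (b - 1) = Rpower x b).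
    { unfold Rminus. rewrite Rpower_plus, Rpower_Ropp, Rpower_1 by auto. field. lra. }
    rewrite rpow_Rpower by exact Hx.
    replace (x * (g * (b * Rpower x (b - 1)) + 0)) with (g * b * (x * Rpower x (b - 1))) by ring.
    rewrite E. ring.
Qed.

(* At [0] the derivative exists from both sides: for [b > 0] the congestion
   term [g * y^(1+b)] is [o(y)], and [rpow] vanishes on negative arguments. *)
Lemma derivable_pt_lim_cost_0 g h b : 0 <= b ->
  derivable_pt_lim (fun y => y * (g * rpow y b + h)) 0 (g * (1 + b) * rpow 0 b + h).
Proof.
  intros [Hb| <-].
  - rewrite (rpow_nonpos_l 0) by lra.
    intros e He.
    destruct (Rpower_small b (e / (Rabs g + 1)) Hb) as [dl [Hdl Hsmall]].
    { apply Rdiv_lt_0_compat; [exact He | pose proof (Rabs_pos g); lra]. }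
    exists (mkposreal dl Hdl). intros y Hy0 Hyd. simpl in Hyd.
    cbv beta. rewrite Rplus_0_l, Rmult_0_l, Rminus_0_r.
    replace (y * (g * rpow y b + h) / y - (g * (1 + b) * 0 + h)) with (g * rpow y b)
      by (field; exact Hy0).
    destruct (Rle_dec y 0) as [Hy|Hy].
    + rewrite rpow_nonpos_l by lra. rewrite Rmult_0_r, Rabs_R0. exact He.
    + rewrite rpow_Rpower, Rabs_mult, (Rabs_pos_eq (Rpower y b)) by (lra || left; apply Rpower_pos).
      rewrite Rabs_pos_eq in Hyd by lra.
      specialize (Hsmall y ltac:(lra)). pose proof (Rpower_pos y b). pose proof (Rabs_pos g).
      apply (Rmult_lt_compat_l (Rabs g + 1)) in Hsmall; [|lra].
      replace ((Rabs g + 1) * (e / (Rabs g + 1))) with e in Hsmall by (field; lra). nra.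
  - rewrite rpow_0_r.
    apply derivable_pt_lim_ext with (fun y => y * (g + h)); [intros z; rewrite rpow_0_r; ring|].
    replace (g * (1 + 0) * 1 + h) with (1 * (g + h) + 0 * 0) by ring.
    apply (derivable_pt_lim_mult (fun y => y) (fun _ => g + h)).
    + apply derivable_pt_lim_id.
    + apply derivable_pt_lim_const.
Qed.

Definition marginal_tau (gam eta : nat -> R) (beta : R) (a : nat) (t : R) : R :=
  gam a * (1 + beta) * rpow t beta + eta a.

Lemma derivable_pt_lim_cost gam eta beta a x : 0 <= beta -> 0 <= x ->
  derivable_pt_lim (fun y => y * tau gam eta beta a y) x (marginal_tau gam eta beta a x).
Proof.
  unfold tau, marginal_tau. intros Hb [Hx| <-].
  - apply derivable_pt_lim_cost_pos; exact Hx.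
  - apply derivable_pt_lim_cost_0; exact Hb.
Qed.

Definition marginal_price (nA nS : nat) (r : nat -> nat -> R) (gam eta : nat -> R) (beta : R)
  (f : nat -> R) (s : nat) : R :=
  rsum nA (fun a => r a s * marginal_tau gam eta beta a (load nS r f a)).

Definition free_price (nA : nat) (r : nat -> nat -> R) (eta : nat -> R) (s : nat) : R :=
  rsum nA (fun a => r a s * eta a).

(* Since [f_a >= r(a,s) f_s], the price of [s] is at least [own_load_coef s * f_s^beta]. *)
Definition own_load_coef (nA : nat) (r : nat -> nat -> R) (gam : nat -> R) (beta : R)
  (s : nat) : R :=
  rsum nA (fun a => r a s * gam a * rpow (r a s) beta).

Definition shift (f : nat -> R) (u v : nat) (t : R) (s : nat) : R :=
  f s + (if Nat.eqb s v then t else 0) - (if Nat.eqb s u then t else 0).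

Lemma load_shift nS r f u v t a : (u < nS)%nat -> (v < nS)%nat ->
  load nS r (shift f u v t) a = load nS r f a + t * (r a v - r a u).
Proof.
  intros Hu Hv. unfold load.
  rewrite (rsum_ext nS _ (fun s => (r a s * f s + (if Nat.eqb s v then r a v * t else 0))
                                 - (if Nat.eqb s u then r a u * t else 0))).
  - rewrite rsum_minus, rsum_plus, !rsum_delta by assumption. ring.
  - intros s _. unfold shift.
    destruct (Nat.eqb_spec s v), (Nat.eqb_spec s u); subst; ring.
Qed.

Lemma feasible_shift nS K grp d f u v t : feasible nS K grp d f ->
  (u < nS)%nat -> (v < nS)%nat -> grp u = grp v -> 0 <= t <= f u ->
  feasible nS K grp d (shift f u v t).
Proof.
  intros [Hf0 Hfd] Hu Hv Hg Ht. split.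
  - intros s Hs. unfold shift. specialize (Hf0 s Hs).
    destruct (Nat.eqb_spec s v), (Nat.eqb_spec s u); subst; lra.
  - intros k Hk. rewrite <- (Hfd k Hk).
    set (e := if Nat.eqb (grp u) k then t else 0).
    rewrite (rsum_ext nS _ (fun s => ((if Nat.eqb (grp s) k then f s else 0)
              + (if Nat.eqb s v then e else 0)) - (if Nat.eqb s u then e else 0))).
    + rewrite rsum_minus, rsum_plus, !rsum_delta by assumption. ring.
    + intros s _. unfold shift, e.
      repeat match goal with |- context [Nat.eqb ?i ?j] => destruct (Nat.eqb_spec i j) end;
        subst; try ring; congruence.
Qed.

Lemma feasible_large_flow nS K grp d f k : feasible nS K grp d f -> (k < K)%nat ->
  (0 < nS)%nat -> 0 < d k -> exists s, (s < nS)%nat /\ grp s = k /\ d k / INR nS <= f s.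
Proof.
  intros [_ Hfd] Hk HnS Hdk.
  destruct (rsum_le_max nS (fun s => if Nat.eqb (grp s) k then f s else 0) HnS)
    as [s [Hs Hmax]].
  assert (HnR : 0 < INR nS) by (apply lt_0_INR; exact HnS).
  rewrite (Hfd k Hk) in Hmax.
  assert (Hflow : d k / INR nS <= if Nat.eqb (grp s) k then f s else 0).
  { apply (Rmult_le_reg_l (INR nS)); [exact HnR|]. unfold Rdiv.
    rewrite <- Rmult_assoc, (Rmult_comm _ (d k)), Rmult_assoc, Rinv_r, Rmult_1_r by lra.
    exact Hmax. }
  assert (0 < d k / INR nS) by (apply Rdiv_lt_0_compat; assumption).
  exists s. destruct (Nat.eqb_spec (grp s) k); [auto | lra].
Qed.

Lemma Rle_one_add_mul x y B L : 0 < L -> L <= y -> 0 <= B -> x <= y + B ->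
  x <= (1 + (B + 1) / L) * y.
Proof.
  intros HL HLy HB Hxy.
  assert (Hq : (B + 1) / L * L = B + 1) by (field; lra).
  assert (0 <= (B + 1) / L) by (left; apply Rdiv_lt_0_compat; lra).
  assert ((B + 1) / L * L <= (B + 1) / L * y) by (apply Rmult_le_compat_l; assumption).
  lra.
Qed.

Section SystemOptimum.

Context {nA nS K : nat} {grp : nat -> nat} {r : nat -> nat -> R} {gam eta : nat -> R}
  {beta : R}.
Hypothesis Hr : forall a s, (a < nA)%nat -> (s < nS)%nat -> 0 <= r a s.
Hypothesis Hgam : forall a, (a < nA)%nat -> 0 < gam a.
Hypothesis Heta : forall a, (a < nA)%nat -> 0 < eta a.
Hypothesis Hbeta : 0 <= beta.

Local Notation price := (sprice nA nS r gam eta beta).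
Local Notation mprice := (marginal_price nA nS r gam eta beta).
Local Notation SO := (SO_profile nA nS K grp r gam eta beta).

Lemma load_ge_own d f a s : feasible nS K grp d f -> (a < nA)%nat -> (s < nS)%nat ->
  r a s * f s <= load nS r f a.
Proof.
  intros [Hf _] Ha Hs. apply (rsum_term_le nS (fun s => r a s * f s)); [|exact Hs].
  intros i Hi. apply Rmult_le_pos; auto.
Qed.

Lemma load_nonneg d f a : feasible nS K grp d f -> (a < nA)%nat -> 0 <= load nS r f a.
Proof.
  intros [Hf _] Ha. apply rsum_nonneg. intros s Hs. apply Rmult_le_pos; auto.
Qed.

(* [shift f u v t] is feasible for [0 < t <= f u], and the right derivative at
   [t = 0] of its cost is [mprice f v - mprice f u]. *)
Lemma SO_marginal_price_le d f u v : SO d f ->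
  (u < nS)%nat -> (v < nS)%nat -> grp u = grp v -> 0 < f u ->
  mprice f u <= mprice f v.
Proof.
  intros [Hf Hopt] Hu Hv Hg Hfu.
  set (x a := load nS r f a). set (D a := r a v - r a u).
  set (h a y := y * tau gam eta beta a y).
  assert (Hlim : limit1_in (fun t => rsum nA (fun a => (h a (x a + t * D a) - h a (x a)) / t))
      (fun t => 0 < t) (rsum nA (fun a => marginal_tau gam eta beta a (x a) * D a)) 0).
  { apply limit1_in_rsum. intros a Ha.
    apply limit1_in_diff_quotient, derivable_pt_lim_cost;
      [exact Hbeta | exact (load_nonneg d f a Hf Ha)]. }
  assert (Hquot : forall t, rsum nA (fun a => (h a (x a + t * D a) - h a (x a)) / t)
      = / t * (cost nA nS r gam eta beta (shift f u v t) - cost nA nS r gam eta beta f)).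
  { intros t. unfold cost. rewrite <- rsum_minus, <- rsum_scal. apply rsum_ext.
    intros a _. rewrite load_shift by assumption. unfold h, x, D, Rdiv. ring. }
  apply limit1_in_right0_nonneg with (t0 := f u) in Hlim; [| exact Hfu |].
  - assert (E : rsum nA (fun a => marginal_tau gam eta beta a (x a) * D a) = mprice f v - mprice f u).
    { unfold marginal_price. rewrite <- rsum_minus. apply rsum_ext. intros. unfold D, x. ring. }
    lra.
  - intros t Ht. rewrite Hquot. apply Rmult_le_pos; [left; apply Rinv_0_lt_compat; lra|].
    assert (Hfeas : feasible nS K grp d (shift f u v t)) by (apply feasible_shift; auto; lra).
    pose proof (Hopt _ Hfeas). lra.
Qed.

Lemma marginal_price_eq f s :
  mprice f s = (1 + beta) * price f s - beta * free_price nA r eta s.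
Proof.
  unfold marginal_price, sprice, free_price, marginal_tau, tau.
  rewrite <- !rsum_scal, <- rsum_minus. apply rsum_ext. intros. ring.
Qed.

Lemma free_price_nonneg s : (s < nS)%nat -> 0 <= free_price nA r eta s.
Proof.
  intros Hs. apply rsum_nonneg. intros a Ha. apply Rmult_le_pos; [auto | left; auto].
Qed.

Lemma free_price_le_sprice f s : (s < nS)%nat -> free_price nA r eta s <= price f s.
Proof.
  intros Hs. apply rsum_le. intros a Ha. unfold tau.
  pose proof (Hr a s Ha Hs). pose proof (Hgam a Ha).
  pose proof (rpow_nonneg (load nS r f a) beta).
  assert (0 <= r a s * (gam a * rpow (load nS r f a) beta)) by (apply Rmult_le_pos; nra).
  nra.
Qed.

Lemma SO_sprice_le_add d f s s' : SO d f -> (s < nS)%nat -> (s' < nS)%nat ->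
  grp s = grp s' -> 0 < f s ->
  price f s <= price f s' + beta * rsum nS (free_price nA r eta).
Proof.
  intros Hso Hs Hs' Hg Hfs.
  pose proof (SO_marginal_price_le d f s s' Hso Hs Hs' Hg Hfs) as Hmp.
  rewrite !marginal_price_eq in Hmp.
  pose proof (free_price_nonneg s Hs). pose proof (free_price_nonneg s' Hs').
  assert (Htot : free_price nA r eta s <= rsum nS (free_price nA r eta))
    by (apply rsum_term_le; [exact free_price_nonneg | exact Hs]).
  assert (beta * free_price nA r eta s <= beta * rsum nS (free_price nA r eta))
    by (apply Rmult_le_compat_l; assumption).
  assert (0 <= beta * free_price nA r eta s') by (apply Rmult_le_pos; assumption).
  assert (0 <= beta * (beta * free_price nA r eta s)) by (repeat apply Rmult_le_pos; assumption).
  nra.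
Qed.

Lemma own_load_coef_pos :
  (forall s, (s < nS)%nat -> 0 < rsum nA (fun a => r a s)) ->
  forall s, (s < nS)%nat -> 0 < own_load_coef nA r gam beta s.
Proof.
  intros Hrs s Hs.
  assert (HnA : (0 < nA)%nat).
  { destruct (Nat.eq_dec nA 0) as [E|]; [|lia].
    specialize (Hrs s Hs). rewrite E in Hrs. unfold rsum in Hrs. simpl in Hrs. lra. }
  destruct (rsum_le_max nA (fun a => r a s) HnA) as [a [Ha Hmax]].
  assert (Hras : 0 < r a s).
  { specialize (Hrs s Hs). pose proof (lt_0_INR nA HnA). nra. }
  apply Rlt_le_trans with (r a s * gam a * rpow (r a s) beta).
  - rewrite rpow_Rpower by exact Hras.
    pose proof (Hgam a Ha). pose proof (Rpower_pos (r a s) beta).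
    apply Rmult_lt_0_compat; [apply Rmult_lt_0_compat|]; assumption.
  - apply (rsum_term_le nA (fun a => r a s * gam a * rpow (r a s) beta)); [|exact Ha].
    intros i Hi. pose proof (Hr i s Hi Hs). pose proof (Hgam i Hi).
    pose proof (rpow_nonneg (r i s) beta). apply Rmult_le_pos; [apply Rmult_le_pos|]; lra.
Qed.

Lemma own_load_price_le d f s : feasible nS K grp d f -> (s < nS)%nat -> 0 < f s ->
  own_load_coef nA r gam beta s * rpow (f s) beta <= price f s.
Proof.
  intros Hf Hs Hfs. unfold own_load_coef, sprice, tau.
  rewrite Rmult_comm, <- rsum_scal. apply rsum_le. intros a Ha.
  pose proof (Hr a s Ha Hs). pose proof (Hgam a Ha). pose proof (Heta a Ha).
  assert (Hmono : rpow (r a s) beta * rpow (f s) beta <= rpow (load nS r f a) beta).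
  { rewrite <- rpow_mult_distr by assumption. apply rpow_le_compat; [exact Hbeta|].
    split; [nra | exact (load_ge_own d f a s Hf Ha Hs)]. }
  pose proof (rpow_nonneg (r a s) beta). pose proof (rpow_nonneg (f s) beta).
  assert (r a s * gam a * (rpow (r a s) beta * rpow (f s) beta) <=
          r a s * gam a * rpow (load nS r f a) beta)
    by (apply Rmult_le_compat_l; [apply Rmult_le_pos|]; lra).
  nra.
Qed.

(* Some used strategy of the group of [s'] carries volume at least [d_min / nS];
   by optimality its marginal price, hence its price, bounds that of [s']. *)
Lemma SO_sprice_lower_bound d f m s' : SO d f -> 0 < dmin K d ->
  (forall s, (s < nS)%nat -> m <= own_load_coef nA r gam beta s) -> 0 <= m ->
  (s' < nS)%nat -> (grp s' < K)%nat ->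
  m * Rpower (/ INR nS) beta / (1 + beta) * Rpower (dmin K d) beta <= price f s'.
Proof.
  intros Hso Hdmin Hm Hm0 Hs' Hk.
  pose proof (dmin_le K d (grp s') Hk) as Hdk.
  assert (HnR : 0 < INR nS) by (apply lt_0_INR; lia).
  destruct (feasible_large_flow nS K grp d f (grp s') (proj1 Hso) Hk ltac:(lia) ltac:(lra))
    as [s0 [Hs0 [Hg0 Hflow]]].
  assert (Hq : 0 < dmin K d / INR nS) by (apply Rdiv_lt_0_compat; assumption).
  assert (dmin K d / INR nS <= d (grp s') / INR nS)
    by (apply Rmult_le_compat_r; [left; apply Rinv_0_lt_compat |]; lra).
  assert (Hpow : Rpower (dmin K d / INR nS) beta <= rpow (f s0) beta)
    by (rewrite <- rpow_Rpower by exact Hq; apply rpow_le_compat; lra).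
  assert (Hsplit : Rpower (dmin K d / INR nS) beta
                   = Rpower (/ INR nS) beta * Rpower (dmin K d) beta).
  { unfold Rdiv. rewrite Rmult_comm, Rpower_mult_distr; [reflexivity | |]; auto.
    apply Rinv_0_lt_compat; exact HnR. }
  pose proof (own_load_price_le d f s0 (proj1 Hso) Hs0 ltac:(lra)).
  pose proof (SO_marginal_price_le d f s0 s' Hso Hs0 Hs' Hg0 ltac:(lra)) as Hmp.
  rewrite !marginal_price_eq in Hmp.
  pose proof (free_price_le_sprice f s0 Hs0). pose proof (free_price_nonneg s' Hs').
  assert (m * Rpower (dmin K d / INR nS) beta <= own_load_coef nA r gam beta s0 * rpow (f s0) beta)
    by (apply Rmult_le_compat; auto; left; apply Rpower_pos).
  assert (0 <= beta * free_price nA r eta s') by (apply Rmult_le_pos; assumption).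
  apply (Rmult_le_reg_l (1 + beta)); [lra|].
  replace ((1 + beta) * (m * Rpower (/ INR nS) beta / (1 + beta) * Rpower (dmin K d) beta))
    with (m * Rpower (dmin K d / INR nS) beta) by (rewrite Hsplit; field; lra).
  nra.
Qed.

End SystemOptimum.

Theorem theorem5
  (nA nS K : nat) (grp : nat -> nat) (r : nat -> nat -> R)
  (gam eta : nat -> R) (beta : R)
  (HK : (1 <= K)%nat)
  (Hgrp : forall s, (s < nS)%nat -> (grp s < K)%nat)
  (Hne : forall k, (k < K)%nat -> exists s, (s < nS)%nat /\ grp s = k)
  (Hr : forall a s, (a < nA)%nat -> (s < nS)%nat -> 0 <= r a s)
  (Hrs : forall s, (s < nS)%nat -> 0 < rsum nA (fun a => r a s))
  (Hra : forall a, (a < nA)%nat -> 0 < rsum nS (fun s => r a s))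
  (Hgam : forall a, (a < nA)%nat -> 0 < gam a)
  (Heta : forall a, (a < nA)%nat -> 0 < eta a)
  (Hbeta : 0 <= beta) :
  exists c : R, 0 < c /\
    forall d : nat -> R,
      (forall k, (k < K)%nat -> 0 <= d k) ->
      0 < dmin K d ->
      forall f : nat -> R,
        SO_profile nA nS K grp r gam eta beta d f ->
        approx_NE nA nS K grp r gam eta beta (c * Rpower (dmin K d) (- beta)) d f.
Proof.
  assert (HnS : (0 < nS)%nat) by (destruct (Hne 0%nat HK) as [s [Hs _]]; lia).
  destruct (exists_pos_lower_bound nS (own_load_coef nA r gam beta) HnS
              (own_load_coef_pos Hr Hgam Hrs)) as [m [Hm Hmle]].
  set (B := beta * rsum nS (free_price nA r eta)).
  assert (HB : 0 <= B).
  { apply Rmult_le_pos; [exact Hbeta|]. apply rsum_nonneg. exact (free_price_nonneg Hr Heta). }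
  set (L0 := m * Rpower (/ INR nS) beta / (1 + beta)).
  assert (HL0 : 0 < L0) by (apply Rdiv_lt_0_compat; [apply Rmult_lt_0_compat, Rpower_pos|]; lra).
  exists ((B + 1) / L0). split; [apply Rdiv_lt_0_compat; lra|].
  intros d _ Hdmin f Hso. split; [exact (proj1 Hso)|].
  intros s s' Hs Hs' Hg Hfs.
  pose proof (Rpower_pos (dmin K d) beta) as Hdpow.
  replace ((B + 1) / L0 * Rpower (dmin K d) (- beta))
    with ((B + 1) / (L0 * Rpower (dmin K d) beta)) by (rewrite Rpower_Ropp; field; lra).
  apply Rle_one_add_mul.
  - apply Rmult_lt_0_compat; assumption.
  - exact (SO_sprice_lower_bound Hr Hgam Heta Hbeta d f m s' Hso Hdmin Hmle
             ltac:(lra) Hs' (Hgrp s' Hs')).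
  - exact HB.
  - exact (SO_sprice_le_add Hr Heta Hbeta d f s s' Hso Hs Hs' Hg Hfs).
Qed.
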